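(* Let $T$ be a generalized causal team over a signature $\sigma=(\mathrm{Dom},\mathrm{Ran})$, and let $\mu:=\bigwedge_{V\in\mathrm{Dom}}\bigwedge_{\mathbf w\in\mathrm{Ran}(\mathbf W_V)}\big(\mathbf W_V=\mathbf w\;\Box\!\!\rightarrow{=}(V)\big)$, where $\mathbf W_V$ lists $\mathrm{Dom}\setminus\{V\}$, and $\chi:=\mu\wedge\bigwedge_{V\in\mathrm{Dom}}{=}(V)$. (i) If $|T^-|=1$, then $T\models^g\mu$ iff $T$ is uniform. (ii) $T\models^g\chi$ iff $|T/_{\approx}|\leq 1$.
   Context: A signature $\sigma$: $\mathrm{Dom}$ nonempty finite set of variables, each with nonempty finite range $\mathrm{Ran}(X)$; $\mathbf X=\mathbf x$ abbreviates $X_1=x_1\wedge\dots\wedge X_n=x_n$ ($\mathbf x\in\prod\mathrm{Ran}(X_i)$), inconsistent if it contains $X=x,X=x'$ with $x\ne x'$. ${=}(V)$ is the constancy atom (dependence atom with empty first component). Systems of functions $\mathcal F$: for each $V\in\mathrm{En}(\mathcal F)\subseteq\mathrm{Dom}$ parents $PA^{\mathcal F}_V\subseteq\mathrm{Dom}\setminus\{V\}$ and $\mathcal F_V:\mathrm{Ran}(PA^{\mathcal F}_V)\to\mathrm{Ran}(V)$; $\mathrm{Ex}(\mathcal F)=\mathrm{Dom}\setminus\mathrm{En}(\mathcal F)$; only recursive systems (acyclic parent graph). An assignment $s$ ($s(X)\in\mathrm{Ran}(X)$) is compatible with $\mathcal F$ if $s(V)=\mathcal F_V(s(PA^{\mathcal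 F}_V))$ for $V\in\mathrm{En}(\mathcal F)$. A generalized causal team is a set $T$ of compatible pairs $(s,\mathcal F)$; $T^-=\{s:(s,\mathcal F)\in T\}$. For consistent $\mathbf X=\mathbf x$: $\mathcal F_{\mathbf X=\mathbf x}$ restricts $\mathcal F$ to $\mathrm{En}(\mathcal F)\setminus\mathbf X$; $s^{\mathcal F}_{\mathbf X=\mathbf x}$: $X_i\mapsto x_i$, $V\mapsto s(V)$ on $\mathrm{Ex}(\mathcal F)\setminus\mathbf X$, $V\mapsto\mathcal F_V(s^{\mathcal F}_{\mathbf X=\mathbf x}(PA^{\mathcal F}_V))$ on $\mathrm{En}(\mathcal F)\setminus\mathbf X$; $T_{\mathbf X=\mathbf x}=\{(s^{\mathcal F}_{\mathbf X=\mathbf x},\mathcal F_{\mathbf X=\mathbf x}):(s,\mathcal F)\in T\}$. $\models^g$: $T\models{=}(V)$ iff $s(V)=s'(V)$ for all $s,s'\in T^-$; $\wedge$ classical; $T\models\mathbf X=\mathbf x\;\Box\!\!\rightarrow\varphi$ iff $\mathbf X=\mathbf x$ inconsistent or $T_{\mathbf X=\mathbf x}\models\varphi$. $\mathrm{Cn}(\mathcal F)=\{V\in\mathrm{En}(\mathcal F):\mathcal F_V\text{ constant}\}$; $\mathcal F_V\sim\mathcal G_V$ iff $\mathcal F_V(\mathbf x\mathbf y)=\mathcal G_V(\mathbf x\mathbf z)$ for all $\mathbf x\in\mathrm{Ran}(PA^{\mathcal F}_V\cap PA^{\mathcal G}_V)$, $\mathbf y\in\mathrm{Ran}(PA^{\mathcal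 F}_V\setminus PA^{\mathcal G}_V)$, $\mathbf z\in\mathrm{Ran}(PA^{\mathcal G}_V\setminus PA^{\mathcal F}_V)$; $\mathcal F\sim\mathcal G$ iff $\mathrm{En}(\mathcal F)\setminus\mathrm{Cn}(\mathcal F)=\mathrm{En}(\mathcal G)\setminus\mathrm{Cn}(\mathcal G)$ and $\mathcal F_V\sim\mathcal G_V$ for each such $V$. $T$ is uniform if $\mathcal F\sim\mathcal G$ for all $(s,\mathcal F),(t,\mathcal G)\in T$. On pairs, $(s,\mathcal F)\approx(t,\mathcal G)$ iff $s=t$ and $\mathcal F\sim\mathcal G$; $T/_{\approx}$ is the set of $\approx$-equivalence classes of elements of $T$. *)

From mathcomp Require Import all_boot.
Set Implicit Arguments.
Unset Strict Implicit.
Unset Printing Implicit Defensive.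

Section CausalTeams.
Variables (D : finType) (Ran : D -> finType).

Definition assignment := forall X : D, Ran X.

(* A system of functions: endogenous variables [en], parents [pa V], and
   F_V represented as a function of a full assignment that only depends on
   the values of the parents (see well_formed).  pa/f on exogenous
   variables are irrelevant dummy data. *)
Record system := Sys {
  en : {set D};
  pa : D -> {set D};
  fn : forall V : D, assignment -> Ran V
}.

Definition pa_edge (F : system) : rel D :=
  fun X V => (V \in en F) && (X \in pa F V).

Definition recursive (F : system) : Prop :=
  forall (V : D) (p : seq D), path (pa_edge F) V p -> last V p = V -> p = [::].

Definition well_formed (F : system) : Prop :=
  [/\ forall V, V \in en F -> V \notin pa F V,
      forall V (s t : assignment), V \in en F ->
        (forall X, X \in pa F V -> s X = t X) -> fn F V s = fn F V t
    & recursive F].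

Definition compatible (s : assignment) (F : system) : Prop :=
  forall V, V \in en F -> s V = fn F V s.

Definition team := assignment * system -> Prop.

Definition gcteam (T : team) : Prop :=
  forall p, T p -> well_formed p.2 /\ compatible p.1 p.2.

(* Interventions X = x: X a set of variables, x an assignment whose values
   on X are the intervened values (always consistent). *)
Definition interv_sys (F : system) (X : {set D}) : system :=
  Sys (en F :\: X) (pa F) (fn F).

Definition interv_step (F : system) (X : {set D}) (x s : assignment)
  (t : assignment) : assignment :=
  fun V => if V \in X then x V
           else if V \in en F then fn F V t else s V.

(* s^F_{X=x}: for a recursive F, #|D| iterations reach the unique solution *)
Definition interv_assign (s : assignment) (F : system) (X : {set D})
  (x : assignment) : assignment :=
  iter #|D| (interv_step F X x s) s.

Definition interv_team (T : team) (X : {set D}) (x : assignment) : team :=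
  fun p => exists q, T q /\ p = (interv_assign q.1 q.2 X x, interv_sys q.2 X).

Definition sat_const (T : team) (V : D) : Prop :=
  forall p q, T p -> T q -> p.1 V = q.1 V.

(* T |= X = x []-> phi  (phi given semantically as a team property) *)
Definition sat_cf (T : team) (X : {set D}) (x : assignment)
  (phi : team -> Prop) : Prop := phi (interv_team T X x).

(* mu := /\_V /\_{w in Ran(W_V)} (W_V = w []-> =(V)), W_V = Dom \ {V};
   w ranges over full assignments, only their values on W_V matter. *)
Definition sat_mu (T : team) : Prop :=
  forall (V : D) (w : assignment),
    sat_cf T (~: [set V]) w (fun T' => sat_const T' V).

Definition sat_chi (T : team) : Prop :=
  sat_mu T /\ forall V : D, sat_const T V.

Definition is_const_fn (F : system) (V : D) : Prop :=
  V \in en F /\ forall s t : assignment, fn F V s = fn F V t.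

Definition nonconst_en (F : system) (V : D) : Prop :=
  V \in en F /\ ~ is_const_fn F V.

Definition sim_fn (F G : system) (V : D) : Prop :=
  forall s t : assignment,
    (forall X, X \in pa F V :&: pa G V -> s X = t X) ->
    fn F V s = fn G V t.

Definition sim_sys (F G : system) : Prop :=
  (forall V, nonconst_en F V <-> nonconst_en G V) /\
  (forall V, nonconst_en F V -> sim_fn F G V).

Definition uniform (T : team) : Prop :=
  forall p q, T p -> T q -> sim_sys p.2 q.2.

Definition team_minus (T : team) (s : assignment) : Prop :=
  exists F, T (s, F).

Definition minus_card1 (T : team) : Prop :=
  exists s0, forall s, team_minus T s <-> s = s0.

Definition approx (p q : assignment * system) : Prop :=
  p.1 = q.1 /\ sim_sys p.2 q.2.

Definition eqclass (T : team) (p : assignment * system) : team :=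
  fun q => T q /\ approx p q.

Definition is_class (T : team) (C : team) : Prop :=
  exists p, T p /\ forall q, C q <-> eqclass T p q.

Definition quot_card_le1 (T : team) : Prop :=
  forall C1 C2, is_class T C1 -> is_class T C2 -> forall q, C1 q <-> C2 q.

End CausalTeams.

(** Intervening on every variable except [V] leaves [V] equal to [F_V w] when
    [F_V] is a non-constant mechanism, and to its actual value [s V]
    otherwise.  Hence [mu] says exactly that, for any two pairs of [T] with a
    common assignment, the same variables carry non-constant mechanisms and
    these mechanisms agree pointwise; by well-formedness (each [F_V] depends
    only on its parents) pointwise agreement is the relation [~] on
    mechanisms.  When all assignments of [T] coincide this is uniformity,
    and [chi] adds precisely that they coincide, i.e. that all pairs of [T]
    are [~~]-equivalent. *)

From Stdlib Require Import Classical FunctionalExtensionality.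
From mathcomp Require Import all_boot.

Set Implicit Arguments.
Unset Strict Implicit.
Unset Printing Implicit Defensive.

Section Lemma5p2.
Variables (D : finType) (Ran : D -> finType).
Implicit Types (s w x : assignment Ran) (F G : system Ran) (T : team Ran).

Lemma interv_assign_exo s F (X : {set D}) x V :
  V \notin X -> V \notin en F -> interv_assign s F X x V = s V.
Proof.
move=> VnX VnF; rewrite /interv_assign.
have : 0 < #|D| by apply/card_gt0P; exists V.
by case: #|D| => // k _; rewrite iterS /interv_step (negbTE VnX) (negbTE VnF).
Qed.

Lemma interv_assign_en s F (X : {set D}) x V :
  well_formed F -> V \notin X -> V \in en F -> pa F V \subset X ->
  interv_assign s F X x V = fn F V x.
Proof.
move=> [_ fn_pa _] VnX VF paX; rewrite /interv_assign.
have : 0 < #|D| by apply/card_gt0P; exists V.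
case cardD: #|D| => [//|k] _; rewrite iterS /interv_step (negbTE VnX) VF.
apply: fn_pa => // Y YpaV; have YX : Y \in X := subsetP paX Y YpaV.
case: k cardD => [cardD1 | k _]; last by rewrite iterS /interv_step YX.
(* [Y] and [V] are distinct, so [D] cannot be a singleton *)
have : #|[set V; Y]| <= #|D| by apply/subset_leq_card/subsetP.
by rewrite cards2 cardD1; case: eqP => // VY; rewrite VY YX in VnX.
Qed.

Lemma pa_sub_others F V : well_formed F -> V \in en F -> pa F V \subset ~: [set V].
Proof.
move=> [paNV _ _] VF; apply/subsetP => Y YpaV; rewrite !inE.
by apply: contraTneq YpaV => ->; apply: paNV.
Qed.

Lemma interv_others_nonconst s F V w :
  well_formed F -> nonconst_en F V ->
  interv_assign s F (~: [set V]) w V = fn F V w.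
Proof.
move=> wfF [VF _]; apply: interv_assign_en => //; first by rewrite !inE eqxx.
exact: pa_sub_others.
Qed.

Lemma interv_others_const s F V w :
  well_formed F -> compatible s F -> ~ nonconst_en F V ->
  interv_assign s F (~: [set V]) w V = s V.
Proof.
move=> wfF sF notVnc; have [VF|VnF] := boolP (V \in en F); last first.
  by apply: interv_assign_exo; rewrite ?inE ?eqxx.
have [_ fnV_const] : is_const_fn F V by apply: NNPP => notVconst; apply: notVnc.
rewrite interv_assign_en ?inE ?eqxx //; last exact: pa_sub_others.
by rewrite [RHS]sF.
Qed.

Lemma sat_mu_interv_others T s F G V w :
  sat_mu T -> T (s, F) -> T (s, G) ->
  interv_assign s F (~: [set V]) w V = interv_assign s G (~: [set V]) w V.
Proof.
move=> muT TF TG.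
by apply: (muT V w (_, interv_sys F _) (_, interv_sys G _));
  [exists (s, F) | exists (s, G)].
Qed.

Section MuSameAssignment.
Variables (T : team Ran) (T_gc : gcteam T).

Lemma sat_mu_nonconst_en s F G V :
  sat_mu T -> T (s, F) -> T (s, G) -> nonconst_en F V -> nonconst_en G V.
Proof.
move=> muT TF TG VncF; apply: NNPP => VncG.
have [[wfF _] [wfG sG]] := (T_gc TF, T_gc TG); rewrite /= in wfF wfG sG.
have fnV_s w : fn F V w = s V.
  rewrite -(interv_others_nonconst s w wfF VncF).
  by rewrite -(interv_others_const w wfG sG VncG); apply: sat_mu_interv_others.
by case: VncF => VF; apply; split=> // a b; rewrite !fnV_s.
Qed.

Lemma sat_mu_fn_eq s F G V :
  sat_mu T -> T (s, F) -> T (s, G) -> nonconst_en F V -> fn F V =1 fn G V.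
Proof.
move=> muT TF TG VncF w; have VncG := sat_mu_nonconst_en muT TF TG VncF.
have [[wfF _] [wfG _]] := (T_gc TF, T_gc TG).
rewrite -(interv_others_nonconst s w wfF VncF).
by rewrite -(interv_others_nonconst s w wfG VncG); apply: sat_mu_interv_others.
Qed.

End MuSameAssignment.

Lemma eqfun_sim_fn F G V :
  well_formed F -> well_formed G -> V \in en F -> V \in en G ->
  fn F V =1 fn G V -> sim_fn F G V.
Proof.
move=> [_ fnF_pa _] [_ fnG_pa _] VF VG fnFG a b ab_paFG.
pose u X := if X \in pa F V then a X else b X.
rewrite (fnF_pa V a u) ?fnFG //; last by move=> X XpaF; rewrite /u XpaF.
apply: fnG_pa => // X XpaG; rewrite /u; case: ifP => // XpaF.
by apply: ab_paFG; rewrite inE XpaF.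
Qed.

Definition same_assignment T := forall p q, T p -> T q -> p.1 = q.1.

Section SameAssignment.
Variables (T : team Ran) (T_gc : gcteam T) (T_same : same_assignment T).

Lemma uniform_sat_mu : uniform T -> sat_mu T.
Proof.
move=> unifT V w _ _ [[s F] [TF ->]] [[t G] [TG ->]] /=.
have [[wfF sF] [wfG tG]] := (T_gc TF, T_gc TG).
have [ncFG simFG] := unifT _ _ TF TG.
have [VncF|VncF] := classic (nonconst_en F V).
  rewrite !interv_others_nonconst //; last exact/ncFG.
  by apply: simFG.
rewrite !interv_others_const //; first by have /= -> := T_same TF TG.
by move/ncFG.
Qed.

Lemma sat_mu_uniform : sat_mu T -> uniform T.
Proof.
move=> muT [s F] [t G] TF TG /=; have st : s = t := T_same TF TG; subst t.
have [[wfF _] [wfG _]] := (T_gc TF, T_gc TG).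
have nc_mu := sat_mu_nonconst_en T_gc muT.
split=> [V | V VncF]; first by split; [apply: nc_mu TF TG | apply: nc_mu TG TF].
have [[VF _] [VG _]] := (VncF, nc_mu _ _ _ _ TF TG VncF).
exact: eqfun_sim_fn wfF wfG VF VG (sat_mu_fn_eq T_gc muT TF TG VncF).
Qed.

Lemma sat_mu_uniformE : sat_mu T <-> uniform T.
Proof. by split; [apply: sat_mu_uniform | apply: uniform_sat_mu]. Qed.

End SameAssignment.

Lemma minus_card1_same_assignment T : minus_card1 T -> same_assignment T.
Proof.
move=> [s0 minusT] [s F] [t G] TF TG /=.
have s_s0 : s = s0 by apply/minusT; exists F.
have t_s0 : t = s0 by apply/minusT; exists G.
by rewrite s_s0 t_s0.
Qed.

Lemma sat_const_same_assignment T :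
  (forall V, sat_const T V) <-> same_assignment T.
Proof.
split=> [constT p q Tp Tq | sameT V p q Tp Tq]; last by rewrite (sameT p q).
by apply: functional_extensionality_dep => V; apply: constT.
Qed.

Lemma approx_refl (p : assignment Ran * system Ran) : well_formed p.2 -> approx p p.
Proof.
move=> wf; split=> //; split=> // V [VF _].
by apply: eqfun_sim_fn.
Qed.

Lemma quot_card_le1P T : gcteam T ->
  quot_card_le1 T <-> forall p q, T p -> T q -> approx p q.
Proof.
move=> T_gc; split=> [quotT p q Tp Tq | approxT].
  have classp : is_class T (eqclass T p) by exists p.
  have classq : is_class T (eqclass T q) by exists q.
  have classq_q : eqclass T q q by split; last exact/approx_refl/(T_gc q Tq).1.
  by case: ((quotT _ _ classp classq q).2 classq_q).
move=> C1 C2 [p1 [Tp1 C1E]] [p2 [Tp2 C2E]] q.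
by split=> [/C1E [Tq _] | /C2E [Tq _]]; [apply/C2E | apply/C1E]; split=> //;
  apply: approxT.
Qed.

End Lemma5p2.

Theorem lemma5p2 (D : finType) (Ran : D -> finType)
  (HD : 0 < #|D|) (HRan : forall X : D, 0 < #|Ran X|)
  (T : team Ran) (HT : gcteam T) :
  (minus_card1 T -> (sat_mu T <-> uniform T)) /\
  (sat_chi T <-> quot_card_le1 T).
Proof.
split=> [/minus_card1_same_assignment|]; first exact: sat_mu_uniformE.
rewrite /sat_chi quot_card_le1P // sat_const_same_assignment.
split=> [[muT sameT] p q Tp Tq | approxT].
  by split; [exact: sameT | exact: sat_mu_uniform HT sameT muT p q Tp Tq].
have sameT : same_assignment T by move=> p q Tp Tq; case: (approxT p q).
split=> //; apply: uniform_sat_mu => // p q Tp Tq.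
by case: (approxT p q).
Qed.
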